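(* Let $f:U\to\mathbb{L}^3$ be a minface with real Weierstrass data $(g_1,g_2,\hat\omega_1du,\hat\omega_2dv)$, and let $\gamma(t)=(\gamma_1(t),\gamma_2(t))$ be the singular curve passing through a cuspidal edge $p=\gamma(0)$ (so that $\gamma$ consists of cuspidal edges near $t=0$). Then the Gaussian curvature $K$ of $f$ (at regular points near $\gamma$) and the singular curvature $\kappa_s$ of $\gamma$ have the same sign. In particular, $\kappa_s(t)=0$ if and only if $g_1'(\gamma_1(t))=0$ or $g_2'(\gamma_2(t))=0$.
   Context: $\mathbb{L}^3$ is $\mathbb{R}^3$ with the Lorentzian metric $-(dx^0)^2+(dx^1)^2+(dx^2)^2$. $U\subset\mathbb{R}^2$ is a domain with coordinates $(u,v)$; $f:U\to\mathbb{L}^3$ is a minface with real Weierstrass data $(g_1,g_2,\hat\omega_1du,\hat\omega_2dv)$ if $g_1=g_1(u)$, $g_2=g_2(v)$ are smooth, $\hat\omega_1=\hat\omega_1(u)$, $\hat\omega_2=\hat\omega_2(v)$ are smooth and nowhere zero, $g_1g_2\neq1$ on an open dense set, and $f(u,v)=\frac12\int_{u_0}^u(-1-g_1^2,1-g_1^2,2g_1)\hat\omega_1du+\frac12\int_{v_0}^v(1+g_2^2,1-g_2^2,-2g_2)\hat\omega_2dv+f(u_0,v_0)$. Singular points (where $f$ is not an immersion) are exactly the points with $g_1g_2=1$; at regular points $f$ is a timelike immersion with zero mean curvature, with Gaussian curvature $K=\det S$ ($S$ the shape operator w.r.t. a spacelike unit normal). Identify $\mathbb{L}^3$ with Euclidean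 $\mathbb{R}^3$ with Euclidean inner product $\langle\,,\,\rangle_E$. Then $n=\big((1-g_1g_2)^2+2(g_1+g_2)^2\big)^{-1/2}(-g_1-g_2,\,g_1-g_2,\,-1-g_1g_2)$ is a Euclidean unit normal field of $f$; set $\lambda=\det(f_u,f_v,n)$. A singular point is a cuspidal edge if the germ of $f$ there is $\mathcal{A}$-equivalent (equal up to local diffeomorphisms of source and target) to the germ of $(u,v)\mapsto(u^2,u^3,v)$ at the origin. The singular curve is a regular curve $\gamma$ in $U$ parametrizing the singular set near $p$; a null vector field $\eta(t)$ is a nonzero vector field along $\gamma$ with $\eta(t)\in\ker df_{\gamma(t)}$, chosen so that $(\gamma'(t),\eta(t))$ is positively oriented. The singular curvature is $\kappa_s(t)=\mathrm{sgn}(d\lambda(\eta(t)))\,\dfrac{\det(\hat\gamma'(t),\hat\gamma''(t),n(\gamma(t)))}{|\hat\gamma'(t)|^3}$, where $\hat\gamma=f\circ\gamma$ and $|\cdot|$ is the Euclidean norm. *)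

From Stdlib Require Import Reals List.
From Coquelicot Require Import Coquelicot.
Open Scope R_scope.

Definition pt2 := (R * R)%type.
Definition pt3 := (R * R * R)%type.
Definition mk3 (x y z : R) : pt3 := (x, y, z).
Definition c0 (a : pt3) : R := fst (fst a).
Definition c1 (a : pt3) : R := snd (fst a).
Definition c2 (a : pt3) : R := snd a.

Definition scal3 (k : R) (a : pt3) : pt3 := mk3 (k * c0 a) (k * c1 a) (k * c2 a).
Definition add3 (a b : pt3) : pt3 := mk3 (c0 a + c0 b) (c1 a + c1 b) (c2 a + c2 b).
Definition dotE (a b : pt3) : R := c0 a * c0 b + c1 a * c1 b + c2 a * c2 b.
Definition normE (a : pt3) : R := sqrt (dotE a a).
Definition cross (a b : pt3) : pt3 :=
  mk3 (c1 a * c2 b - c2 a * c1 b) (c2 a * c0 b - c0 a * c2 b) (c0 a * c1 b - c1 a * c0 b).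
Definition det3 (a b c : pt3) : R := dotE (cross a b) c.
Definition dotL (a b : pt3) : R := - c0 a * c0 b + c1 a * c1 b + c2 a * c2 b.

Definition det2 (a b : pt2) : R := fst a * snd b - snd a * fst b.
Definition dist2 (p q : pt2) : R := sqrt ((fst p - fst q) ^ 2 + (snd p - snd q) ^ 2).

Definition sgn (x : R) : R :=
  match Rlt_dec 0 x with left _ => 1 | right _ =>
    match Rlt_dec x 0 with left _ => -1 | right _ => 0 end end.

Definition connected2 (U : pt2 -> Prop) : Prop :=
  forall A B : pt2 -> Prop, open A -> open B ->
    (forall q, U q -> A q \/ B q) -> (forall q, U q -> A q -> B q -> False) ->
    (forall q, U q -> A q) \/ (forall q, U q -> B q).
Definition domain2 (U : pt2 -> Prop) : Prop :=
  open U /\ connected2 U /\ exists q, U q.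

Definition smooth_on (O : R -> Prop) (g : R -> R) : Prop :=
  forall (n : nat) (x : R), O x -> ex_derive_n g n x.

Definition upd2 (p : pt2) (i : nat) (t : R) : pt2 :=
  match i with O => (t, snd p) | _ => (fst p, t) end.
Definition crd2 (p : pt2) (i : nat) : R := match i with O => fst p | _ => snd p end.
Definition pd2 (i : nat) (h : pt2 -> R) (p : pt2) : R :=
  Derive (fun t => h (upd2 p i t)) (crd2 p i).
Definition ipd2 (l : list nat) (h : pt2 -> R) : pt2 -> R := fold_right pd2 h l.
Definition smooth2 (O : pt2 -> Prop) (h : pt2 -> R) : Prop :=
  forall (l : list nat) (p : pt2), O p ->
    continuous (ipd2 l h) p /\
    forall i, (i < 2)%nat -> ex_derive (fun t => ipd2 l h (upd2 p i t)) (crd2 p i).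

Definition upd3 (p : pt3) (i : nat) (t : R) : pt3 :=
  match i with O => mk3 t (c1 p) (c2 p) | 1%nat => mk3 (c0 p) t (c2 p) | _ => mk3 (c0 p) (c1 p) t end.
Definition crd3 (p : pt3) (i : nat) : R :=
  match i with O => c0 p | 1%nat => c1 p | _ => c2 p end.
Definition pd3 (i : nat) (h : pt3 -> R) (p : pt3) : R :=
  Derive (fun t => h (upd3 p i t)) (crd3 p i).
Definition ipd3 (l : list nat) (h : pt3 -> R) : pt3 -> R := fold_right pd3 h l.
Definition smooth3 (O : pt3 -> Prop) (h : pt3 -> R) : Prop :=
  forall (l : list nat) (p : pt3), O p ->
    continuous (ipd3 l h) p /\
    forall i, (i < 3)%nat -> ex_derive (fun t => ipd3 l h (upd3 p i t)) (crd3 p i).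

Definition smooth2map (O : pt2 -> Prop) (phi : pt2 -> pt2) : Prop :=
  smooth2 O (fun p => fst (phi p)) /\ smooth2 O (fun p => snd (phi p)).
Definition smooth3map (O : pt3 -> Prop) (Phi : pt3 -> pt3) : Prop :=
  smooth3 O (fun p => c0 (Phi p)) /\ smooth3 O (fun p => c1 (Phi p)) /\
  smooth3 O (fun p => c2 (Phi p)).

Definition diffeo2 (A B : pt2 -> Prop) (phi : pt2 -> pt2) : Prop :=
  open A /\ open B /\ exists psi : pt2 -> pt2,
    smooth2map A phi /\ smooth2map B psi /\
    (forall p, A p -> B (phi p) /\ psi (phi p) = p) /\
    (forall q, B q -> A (psi q) /\ phi (psi q) = q).
Definition diffeo3 (A B : pt3 -> Prop) (Phi : pt3 -> pt3) : Prop :=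
  open A /\ open B /\ exists Psi : pt3 -> pt3,
    smooth3map A Phi /\ smooth3map B Psi /\
    (forall p, A p -> B (Phi p) /\ Psi (Phi p) = p) /\
    (forall q, B q -> A (Psi q) /\ Phi (Psi q) = q).

Definition proj1U (U : pt2 -> Prop) (u : R) : Prop := exists v, U (u, v).
Definition proj2U (U : pt2 -> Prop) (v : R) : Prop := exists u, U (u, v).

Definition real_weierstrass_data (U : pt2 -> Prop) (g1 g2 w1 w2 : R -> R) : Prop :=
  domain2 U /\
  smooth_on (proj1U U) g1 /\ smooth_on (proj1U U) w1 /\
  smooth_on (proj2U U) g2 /\ smooth_on (proj2U U) w2 /\
  (forall u, proj1U U u -> w1 u <> 0) /\ (forall v, proj2U U v -> w2 v <> 0) /\
  (* g1 g2 <> 1 on an open dense subset of U (the set is automatically open) *)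
  (forall q, U q -> forall r, 0 < r ->
     exists q', U q' /\ dist2 q q' < r /\ g1 (fst q') * g2 (snd q') <> 1).

(* f(u,v) = 1/2 int_{u0}^u (-1-g1^2,1-g1^2,2g1) w1 du
          + 1/2 int_{v0}^v (1+g2^2,1-g2^2,-2g2) w2 dv + f(u0,v0),  c = f(u0,v0) *)
Definition minface (g1 g2 w1 w2 : R -> R) (u0 v0 : R) (c : pt3) (q : pt2) : pt3 :=
  let u := fst q in let v := snd q in
  mk3 (c0 c + / 2 * RInt (fun s => (-1 - g1 s ^ 2) * w1 s) u0 u
            + / 2 * RInt (fun s => (1 + g2 s ^ 2) * w2 s) v0 v)
      (c1 c + / 2 * RInt (fun s => (1 - g1 s ^ 2) * w1 s) u0 u
            + / 2 * RInt (fun s => (1 - g2 s ^ 2) * w2 s) v0 v)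
      (c2 c + / 2 * RInt (fun s => 2 * g1 s * w1 s) u0 u
            + / 2 * RInt (fun s => -2 * g2 s * w2 s) v0 v).

Definition dF (l : list nat) (F : pt2 -> pt3) (q : pt2) : pt3 :=
  mk3 (ipd2 l (fun p => c0 (F p)) q) (ipd2 l (fun p => c1 (F p)) q)
      (ipd2 l (fun p => c2 (F p)) q).
Definition fu F q := dF (0%nat :: nil) F q.
Definition fv F q := dF (1%nat :: nil) F q.
Definition fuu F q := dF (0%nat :: 0%nat :: nil) F q.
Definition fuv F q := dF (0%nat :: 1%nat :: nil) F q.
Definition fvv F q := dF (1%nat :: 1%nat :: nil) F q.

Definition singular (F : pt2 -> pt3) (q : pt2) : Prop :=
  cross (fu F q) (fv F q) = mk3 0 0 0.

(* Lorentzian unit (spacelike) normal: N satisfies <N,x>_L = det(f_u,f_v,x) *)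
Definition lnormal (F : pt2 -> pt3) (q : pt2) : pt3 :=
  let c := cross (fu F q) (fv F q) in
  let N := mk3 (- c0 c) (c1 c) (c2 c) in
  scal3 (/ sqrt (dotL N N)) N.

(* Gaussian curvature K = det S, S = I^{-1} II the shape operator *)
Definition gauss (F : pt2 -> pt3) (q : pt2) : R :=
  let E := dotL (fu F q) (fu F q) in
  let Fm := dotL (fu F q) (fv F q) in
  let G := dotL (fv F q) (fv F q) in
  let nu := lnormal F q in
  let L := dotL (fuu F q) nu in
  let M := dotL (fuv F q) nu in
  let N := dotL (fvv F q) nu in
  let D := E * G - Fm * Fm in
  let S11 := (G * L - Fm * M) / D in
  let S12 := (G * M - Fm * N) / D in
  let S21 := (- Fm * L + E * M) / D in
  let S22 := (- Fm * M + E * N) / D in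
  S11 * S22 - S12 * S21.

Definition euc_normal (g1 g2 : R -> R) (q : pt2) : pt3 :=
  let a := g1 (fst q) in let b := g2 (snd q) in
  scal3 (/ sqrt ((1 - a * b) ^ 2 + 2 * (a + b) ^ 2)) (mk3 (- a - b) (a - b) (- 1 - a * b)).

Definition lam (F : pt2 -> pt3) (g1 g2 : R -> R) (q : pt2) : R :=
  det3 (fu F q) (fv F q) (euc_normal g1 g2 q).

Definition cusp (q : pt2) : pt3 := mk3 (fst q ^ 2) (fst q ^ 3) (snd q).

(* the germ of F at p is A-equivalent to the germ of the cusp map at 0 *)
Definition cuspidal_edge (U : pt2 -> Prop) (F : pt2 -> pt3) (p : pt2) : Prop :=
  exists (W V : pt2 -> Prop) (phi : pt2 -> pt2) (O Q : pt3 -> Prop) (Psi : pt3 -> pt3),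
    W (0, 0) /\ V p /\ (forall q, V q -> U q) /\ diffeo2 W V phi /\ phi (0, 0) = p /\
    O (mk3 0 0 0) /\ diffeo3 O Q Psi /\ Psi (mk3 0 0 0) = F p /\
    forall q, W q -> O (cusp q) /\ F (phi q) = Psi (cusp q).

Definition dcurve (gam : R -> pt2) (t : R) : pt2 :=
  (Derive (fun s => fst (gam s)) t, Derive (fun s => snd (gam s)) t).

Definition singular_curve (U : pt2 -> Prop) (F : pt2 -> pt3) (gam : R -> pt2) (a b : R) : Prop :=
  a < 0 < b /\
  smooth_on (fun t => a < t < b) (fun t => fst (gam t)) /\
  smooth_on (fun t => a < t < b) (fun t => snd (gam t)) /\
  (forall t, a < t < b -> U (gam t) /\ dcurve gam t <> (0, 0) /\ singular F (gam t)) /\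
  exists V : pt2 -> Prop, open V /\ V (gam 0) /\ (forall q, V q -> U q) /\
    forall q, V q -> (singular F q <-> exists t, a < t < b /\ gam t = q).

Definition null_vector_field (F : pt2 -> pt3) (gam eta : R -> pt2) (a b : R) : Prop :=
  forall t, a < t < b ->
    eta t <> (0, 0) /\
    add3 (scal3 (fst (eta t)) (fu F (gam t))) (scal3 (snd (eta t)) (fv F (gam t))) = mk3 0 0 0 /\
    0 < det2 (dcurve gam t) (eta t).

Definition sing_curv (F : pt2 -> pt3) (g1 g2 : R -> R) (gam eta : R -> pt2) (t : R) : R :=
  let q := gam t in
  let dlam := fst (eta t) * pd2 0 (lam F g1 g2) q + snd (eta t) * pd2 1 (lam F g1 g2) q in
  let gh i := fun s => match i with O => c0 (F (gam s)) | 1%nat => c1 (F (gam s)) | _ => c2 (F (gam s)) end in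
  let gh1 := mk3 (Derive (gh 0%nat) t) (Derive (gh 1%nat) t) (Derive (gh 2%nat) t) in
  let gh2 := mk3 (Derive_n (gh 0%nat) 2 t) (Derive_n (gh 1%nat) 2 t) (Derive_n (gh 2%nat) 2 t) in
  sgn dlam * det3 gh1 gh2 (euc_normal g1 g2 q) / (normE gh1) ^ 3.

(* In the real Weierstrass representation
     f(u,v) = c + 1/2 \int null1(g1) w1 du + 1/2 \int null2(g2) w2 dv,
   null1(a) = (-1-a^2, 1-a^2, 2a) and null2(b) = (1+b^2, 1-b^2, -2b) are Lorentzian null vectors, so
   the coordinates are null and f_uv = 0.  Hence
     K = -L N / <f_u,f_v>^2 = 4 g1' g2' / (w1 w2 (1 - g1 g2)^4)
   has the sign of w1 w2 g1' g2'.
   On the singular set g1 g2 = 1 one has null2(g2) = -g1^(-2) null1(g1), so f_u, f_v and the velocity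
   of f o gamma all lie on the null line of null1(g1).  Differentiating g1 g2 = 1 along gamma shows
   that (g1', g1^2 g2') is orthogonal to gamma', and eta lies in the kernel of df iff it is parallel to
   (w2, w1 g1^2); writing both vectors with scalar factors turns kappa_s into a positive multiple of
   w1 w2 g1' g2'.  Continuity of w1 w2 g1' g2' transfers the sign of kappa_s to K near gamma(t). *)

From Pilot Require Import Defs.
From Stdlib Require Import Reals Lra Psatz Classical.
From Coquelicot Require Import Coquelicot.
Open Scope R_scope.

(** * Calculus on the real line *)

(* [auto_derive] leaves eta-expanded atoms [fun x => f x], which [ring] does not identify with [f]. *)
Ltac eta_reduce :=
  repeat match goal with |- context [fun x => ?f x] => change (fun x => f x) with f end.
Ltac eta_ring := eta_reduce; ring.

Lemma Derive_plus_consts (f : R -> R) (C1 C2 x : R) :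
  Derive (fun s => C1 + f s + C2) x = Derive f x.
Proof. unfold Derive. f_equal. apply Lim_ext. intros h. f_equal. ring. Qed.

Lemma Derive_const_plus (f : R -> R) (C x : R) : Derive (fun s => C + f s) x = Derive f x.
Proof. unfold Derive. f_equal. apply Lim_ext. intros h. f_equal. ring. Qed.

Lemma Derive_locally_const (f : R -> R) (C t : R) :
  locally t (fun s => f s = C) -> Derive f t = 0.
Proof. intros H. rewrite (Derive_ext_loc _ _ _ H). apply Derive_const. Qed.

Lemma Derive_product_locally_const (f g G1 G2 : R -> R) (t : R) :
  ex_derive f (G1 t) -> ex_derive g (G2 t) -> ex_derive G1 t -> ex_derive G2 t ->
  locally t (fun s => f (G1 s) * g (G2 s) = 1) ->
  Derive f (G1 t) * Derive G1 t * g (G2 t) + f (G1 t) * Derive g (G2 t) * Derive G2 t = 0.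
Proof.
  intros Hf Hg H1 H2 Hloc. rewrite <- (Derive_locally_const _ 1 t Hloc).
  symmetry. apply is_derive_unique. auto_derive; [repeat split; auto | eta_ring].
Qed.

Lemma Derive_mul_at_root (f g : R -> R) (x df : R) :
  is_derive f x df -> ex_derive g x -> f x = 0 -> Derive (fun s => f s * g s) x = df * g x.
Proof.
  intros Hf [dg Hg] H0. apply is_derive_unique.
  replace (df * g x) with (df * g x + f x * dg) by (rewrite H0; ring).
  apply (is_derive_mult f g x df dg Hf Hg). intros; apply Rmult_comm.
Qed.

Definition intervalP (I : R -> Prop) : Prop := forall x y z, I x -> I z -> x <= y <= z -> I y.

Lemma is_derive_RInt_interval (I : R -> Prop) (P : R -> R) (x0 x : R) :
  open I -> intervalP I -> (forall y, I y -> continuous P y) -> I x0 -> I x ->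
  is_derive (fun y => RInt P x0 y) x (P x).
Proof.
  intros Ho Hi Hc H0 Hx. apply (is_derive_RInt P _ x0); [|auto].
  generalize (Ho x Hx). apply filter_imp. intros y Hy.
  apply (RInt_correct P x0 y), (ex_RInt_continuous P x0 y). intros z Hz. apply Hc.
  destruct (Rle_dec x0 y).
  - rewrite Rmin_left, Rmax_right in Hz by lra. apply (Hi x0 z y); auto.
  - rewrite Rmin_right, Rmax_left in Hz by lra. apply (Hi y z x0); auto.
Qed.

Lemma pow2_pos x : x <> 0 -> 0 < x ^ 2.
Proof. intros Hx. rewrite <- Rsqr_pow2. now apply Rsqr_pos_lt. Qed.

Lemma sgn_mul_pos c z : 0 < c -> sgn (c * z) = sgn z.
Proof.
  intros Hc. unfold sgn.
  destruct (Rlt_dec 0 (c * z)), (Rlt_dec 0 z); try reflexivity; try nra.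
  destruct (Rlt_dec (c * z) 0), (Rlt_dec z 0); try reflexivity; nra.
Qed.

Lemma sgn_div_abs z : z <> 0 -> sgn z = z / Rabs z.
Proof.
  intros Hz. unfold sgn, Rabs. destruct (Rcase_abs z), (Rlt_dec 0 z); try lra.
  - destruct (Rlt_dec z 0); [field|]; lra.
  - field. lra.
Qed.

Lemma orthogonal_param p q x1 x2 : x1 ^ 2 + x2 ^ 2 <> 0 -> p * x1 + q * x2 = 0 ->
  exists mu, p = mu * x2 /\ q = - (mu * x1).
Proof.
  intros Hx Hpq. exists ((p * x2 - q * x1) / (x1 ^ 2 + x2 ^ 2)).
  split; apply (Rmult_eq_reg_r (x1 ^ 2 + x2 ^ 2)); auto; field_simplify; auto.
  - replace (p * x1 ^ 2 + p * x2 ^ 2) with (p * x2 ^ 2 - q * x1 * x2 + x1 * (p * x1 + q * x2)) by ring.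
    rewrite Hpq. ring.
  - replace (q * x1 ^ 2 + q * x2 ^ 2) with (q * x1 ^ 2 - p * x1 * x2 + x2 * (p * x1 + q * x2)) by ring.
    rewrite Hpq. ring.
Qed.

(** * The parameter domain *)

Lemma connected2_image_interval (U : pt2 -> Prop) (pi : pt2 -> R) :
  connected2 U -> (forall q, continuous pi q) -> intervalP (fun x => exists q, U q /\ pi q = x).
Proof.
  intros HU Hpi x y z (qx & Hqx & <-) (qz & Hqz & <-) Hy. apply NNPP. intros Hn.
  destruct (HU (fun q => pi q < y) (fun q => y < pi q)) as [HA | HB].
  - apply (open_comp pi (fun s => s < y)); [intros; apply Hpi | apply open_lt].
  - apply (open_comp pi (fun s => y < s)); [intros; apply Hpi | apply open_gt].
  - intros q Hq. destruct (Rtotal_order (pi q) y) as [H | [H | H]]; auto.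
    exfalso. apply Hn. now exists q.
  - intros q _ H1 H2. lra.
  - specialize (HA qz Hqz). lra.
  - specialize (HB qx Hqx). lra.
Qed.

Lemma continuous_fst_pt2 (q : pt2) : continuous fst q.
Proof. destruct q. apply continuous_fst. Qed.

Lemma continuous_snd_pt2 (q : pt2) : continuous snd q.
Proof. destruct q. apply continuous_snd. Qed.

Lemma interval_proj1U U : connected2 U -> intervalP (proj1U U).
Proof.
  intros HU x y z [vx Hx] [vz Hz] Hy.
  destruct (connected2_image_interval U fst HU continuous_fst_pt2 x y z) as (q & Hq & <-);
    [now exists (x, vx) | now exists (z, vz) | exact Hy |].
  exists (snd q). now rewrite <- surjective_pairing.
Qed.

Lemma interval_proj2U U : connected2 U -> intervalP (proj2U U).
Proof.
  intros HU x y z [ux Hx] [uz Hz] Hy.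
  destruct (connected2_image_interval U snd HU continuous_snd_pt2 x y z) as (q & Hq & <-);
    [now exists (ux, x) | now exists (uz, z) | exact Hy |].
  exists (fst q). now rewrite <- surjective_pairing.
Qed.

Lemma open_proj1U U : open U -> open (proj1U U).
Proof.
  intros HU x [v Hv]. destruct (HU _ Hv) as [e He].
  exists e. intros y Hy. exists v. apply He. split; [exact Hy | apply ball_center].
Qed.

Lemma open_proj2U U : open U -> open (proj2U U).
Proof.
  intros HU x [u Hu]. destruct (HU _ Hu) as [e He].
  exists e. intros y Hy. exists u. apply He. split; [apply ball_center | exact Hy].
Qed.

Lemma continuous_fst_comp (f : R -> R) (p : pt2) :
  continuous f (fst p) -> continuous (fun q : pt2 => f (fst q)) p.
Proof. intros Hf. apply (continuous_comp fst f); [apply continuous_fst_pt2 | exact Hf]. Qed.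

Lemma continuous_snd_comp (f : R -> R) (p : pt2) :
  continuous f (snd p) -> continuous (fun q : pt2 => f (snd q)) p.
Proof. intros Hf. apply (continuous_comp snd f); [apply continuous_snd_pt2 | exact Hf]. Qed.

Lemma dist2_fst (q p : pt2) : Rabs (fst q - fst p) <= dist2 q p.
Proof.
  unfold dist2. rewrite <- sqrt_Rsqr_abs. apply sqrt_le_1_alt.
  rewrite Rsqr_pow2. assert (0 <= (snd q - snd p) ^ 2) by apply pow2_ge_0. lra.
Qed.

Lemma dist2_snd (q p : pt2) : Rabs (snd q - snd p) <= dist2 q p.
Proof.
  unfold dist2. rewrite <- sqrt_Rsqr_abs. apply sqrt_le_1_alt.
  rewrite Rsqr_pow2. assert (0 <= (fst q - fst p) ^ 2) by apply pow2_ge_0. lra.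
Qed.

Lemma sign_persists (m : pt2 -> R) (p : pt2) : continuous m p -> m p <> 0 ->
  exists r, 0 < r /\ forall q, dist2 q p < r -> 0 < m q * m p.
Proof.
  intros Hc Hp.
  assert (HL : locally (m p) (fun z => 0 < z * m p)).
  { exists (mkposreal _ (Rabs_pos_lt _ Hp)). intros z Hz.
    change (Rabs (z - m p) < Rabs (m p)) in Hz. unfold Rabs in *.
    destruct (Rcase_abs (z - m p)), (Rcase_abs (m p)); nra. }
  destruct (Hc _ HL) as [e He]. exists e. split; [apply cond_pos |].
  intros q Hq. apply He. split.
  - change (Rabs (fst q - fst p) < e). eapply Rle_lt_trans; [apply dist2_fst | exact Hq].
  - change (Rabs (snd q - snd p) < e). eapply Rle_lt_trans; [apply dist2_snd | exact Hq].
Qed.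

(** * Additively separable maps *)

Definition sep3 (K : pt3) (A B : R -> pt3) (q : pt2) : pt3 := add3 (add3 K (A (fst q))) (B (snd q)).

Definition dvec (A : R -> pt3) (x : R) : pt3 :=
  mk3 (Derive (fun s => c0 (A s)) x) (Derive (fun s => Defs.c1 (A s)) x) (Derive (fun s => c2 (A s)) x).

Definition ex_dvec (A : R -> pt3) (x : R) : Prop :=
  ex_derive (fun s => c0 (A s)) x /\ ex_derive (fun s => Defs.c1 (A s)) x /\
  ex_derive (fun s => c2 (A s)) x.

Section Separable.
Variables (K : pt3) (A B : R -> pt3).

Lemma fu_sep3 q : fu (sep3 K A B) q = dvec A (fst q).
Proof. unfold fu, dF, dvec, ipd2, pd2; cbn. f_equal; apply Derive_plus_consts. Qed.

Lemma fv_sep3 q : fv (sep3 K A B) q = dvec B (snd q).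
Proof. unfold fv, dF, dvec, ipd2, pd2; cbn. f_equal; apply Derive_const_plus. Qed.

Lemma fuv_sep3 q : fuv (sep3 K A B) q = mk3 0 0 0.
Proof.
  unfold fuv, dF, ipd2, pd2; cbn.
  f_equal; erewrite Derive_ext; try apply Derive_const; intros u; apply Derive_const_plus.
Qed.

Lemma fuu_sep3 q : fuu (sep3 K A B) q = dvec (dvec A) (fst q).
Proof.
  unfold fuu, dF, dvec, ipd2, pd2; cbn.
  f_equal; apply Derive_ext; intros u; apply Derive_plus_consts.
Qed.

Lemma fvv_sep3 q : fvv (sep3 K A B) q = dvec (dvec B) (snd q).
Proof.
  unfold fvv, dF, dvec, ipd2, pd2; cbn.
  f_equal; apply Derive_ext; intros v; apply Derive_const_plus.
Qed.

Section Curve.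
Variables (G1 G2 : R -> R) (t : R).

Lemma Derive_sep3_curve (c : pt3 -> R) (s : R) :
  ex_derive (fun x => c (A x)) (G1 s) -> ex_derive (fun x => c (B x)) (G2 s) ->
  ex_derive G1 s -> ex_derive G2 s ->
  Derive (fun r => c K + c (A (G1 r)) + c (B (G2 r))) s =
  Derive G1 s * Derive (fun x => c (A x)) (G1 s) + Derive G2 s * Derive (fun x => c (B x)) (G2 s).
Proof.
  intros Hf Hg H1 H2. set (f := fun x => c (A x)) in *; set (g := fun x => c (B x)) in *.
  change (Derive (fun r => c K + f (G1 r) + g (G2 r)) s =
          Derive G1 s * Derive f (G1 s) + Derive G2 s * Derive g (G2 s)).
  apply is_derive_unique. auto_derive; [repeat split; auto | eta_ring].
Qed.

Lemma Derive2_sep3_curve (c : pt3 -> R) :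
  locally t (fun s => ex_derive (fun x => c (A x)) (G1 s) /\ ex_derive (fun x => c (B x)) (G2 s) /\
                      ex_derive G1 s /\ ex_derive G2 s) ->
  ex_derive (Derive (fun x => c (A x))) (G1 t) -> ex_derive (Derive (fun x => c (B x))) (G2 t) ->
  ex_derive (Derive G1) t -> ex_derive (Derive G2) t ->
  Derive (Derive (fun r => c K + c (A (G1 r)) + c (B (G2 r)))) t =
  Derive G1 t ^ 2 * Derive (Derive (fun x => c (A x))) (G1 t)
    + Derive (Derive G1) t * Derive (fun x => c (A x)) (G1 t)
  + (Derive G2 t ^ 2 * Derive (Derive (fun x => c (B x))) (G2 t)
    + Derive (Derive G2) t * Derive (fun x => c (B x)) (G2 t)).
Proof.
  intros Hloc Hf Hg H1 H2.
  rewrite (Derive_ext_loc _ (fun s => Derive G1 s * Derive (fun x => c (A x)) (G1 s)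
                                      + Derive G2 s * Derive (fun x => c (B x)) (G2 s))).
  2: { generalize Hloc; apply filter_imp; intros s Hs; apply Derive_sep3_curve; tauto. }
  set (f := Derive (fun x => c (A x))); set (g := Derive (fun x => c (B x))).
  apply locally_singleton in Hloc. destruct Hloc as (_ & _ & D1 & D2).
  apply is_derive_unique. auto_derive; [repeat split; auto | eta_ring].
Qed.
End Curve.

Lemma dvec_sep3_curve (gam : R -> pt2) (t : R) :
  ex_dvec A (fst (gam t)) -> ex_dvec B (snd (gam t)) ->
  ex_derive (fun s => fst (gam s)) t -> ex_derive (fun s => snd (gam s)) t ->
  dvec (fun s => sep3 K A B (gam s)) t =
  add3 (scal3 (Derive (fun s => fst (gam s)) t) (dvec A (fst (gam t))))
       (scal3 (Derive (fun s => snd (gam s)) t) (dvec B (snd (gam t)))).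
Proof.
  intros (HA0 & HA1 & HA2) (HB0 & HB1 & HB2) H1 H2.
  unfold dvec, add3, scal3; cbn. f_equal; apply Derive_sep3_curve; auto.
Qed.

Lemma dvec2_sep3_curve (gam : R -> pt2) (t : R) :
  locally t (fun s => ex_dvec A (fst (gam s)) /\ ex_dvec B (snd (gam s)) /\
                      ex_derive (fun r => fst (gam r)) s /\ ex_derive (fun r => snd (gam r)) s) ->
  ex_dvec (dvec A) (fst (gam t)) -> ex_dvec (dvec B) (snd (gam t)) ->
  ex_derive (Derive (fun s => fst (gam s))) t -> ex_derive (Derive (fun s => snd (gam s))) t ->
  dvec (dvec (fun s => sep3 K A B (gam s))) t =
  add3 (add3 (scal3 (Derive (fun s => fst (gam s)) t ^ 2) (dvec (dvec A) (fst (gam t))))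
             (scal3 (Derive (Derive (fun s => fst (gam s))) t) (dvec A (fst (gam t)))))
       (add3 (scal3 (Derive (fun s => snd (gam s)) t ^ 2) (dvec (dvec B) (snd (gam t))))
             (scal3 (Derive (Derive (fun s => snd (gam s))) t) (dvec B (snd (gam t))))).
Proof.
  intros Hloc (HA0 & HA1 & HA2) (HB0 & HB1 & HB2) H1 H2.
  unfold dvec, add3, scal3; cbn.
  f_equal; apply Derive2_sep3_curve; auto;
    generalize Hloc; apply filter_imp; unfold ex_dvec; tauto.
Qed.
End Separable.

(** * Weierstrass integrals *)

Definition is_dvec (N : R -> pt3) (a : R) (l : pt3) : Prop :=
  is_derive (fun x => c0 (N x)) a (c0 l) /\ is_derive (fun x => Defs.c1 (N x)) a (Defs.c1 l) /\
  is_derive (fun x => c2 (N x)) a (c2 l).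

Definition weierstrass_int (N : R -> pt3) (g w : R -> R) (x0 x : R) : pt3 :=
  mk3 (/ 2 * RInt (fun s => c0 (N (g s)) * w s) x0 x)
      (/ 2 * RInt (fun s => Defs.c1 (N (g s)) * w s) x0 x)
      (/ 2 * RInt (fun s => c2 (N (g s)) * w s) x0 x).

Section WeierstrassIntegral.
Variables (N dN : R -> pt3) (I : R -> Prop) (g w : R -> R) (x0 : R).
Hypotheses (HN : forall a, is_dvec N a (dN a)) (HIo : open I) (HIi : intervalP I) (Hx0 : I x0)
  (Hg : forall x, I x -> ex_derive g x) (Hw : forall x, I x -> ex_derive w x).

Section Component.
Variable c : pt3 -> R.
Hypothesis HNc : forall a, is_derive (fun x => c (N x)) a (c (dN a)).

Lemma is_derive_weierstrass_int_comp x : I x ->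
  is_derive (fun y => / 2 * RInt (fun s => c (N (g s)) * w s) x0 y) x (/ 2 * w x * c (N (g x))).
Proof.
  intros Hx. replace (/ 2 * w x * c (N (g x))) with (/ 2 * (c (N (g x)) * w x)) by ring.
  apply is_derive_scal, (is_derive_RInt_interval I (fun s => c (N (g s)) * w s)); auto.
  intros y Hy. apply (@ex_derive_continuous R_AbsRing R_NormedModule).
  set (f := fun a => c (N a)). change (ex_derive (fun s => f (g s) * w s) y).
  auto_derive. repeat split; auto. exists (c (dN (g y))). apply HNc.
Qed.

Lemma is_derive2_weierstrass_int_comp x : I x ->
  is_derive (Derive (fun y => / 2 * RInt (fun s => c (N (g s)) * w s) x0 y)) x
    (/ 2 * (Derive w x * c (N (g x)) + w x * Derive g x * c (dN (g x)))).
Proof.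
  intros Hx. apply (is_derive_ext_loc (fun y => / 2 * w y * c (N (g y)))).
  { generalize (HIo x Hx). apply filter_imp. intros y Hy.
    symmetry. apply is_derive_unique, is_derive_weierstrass_int_comp, Hy. }
  set (f := fun a => c (N a)). change (is_derive (fun y => / 2 * w y * f (g y)) x
    (/ 2 * (Derive w x * f (g x) + w x * Derive g x * c (dN (g x))))).
  assert (Hf : is_derive f (g x) (c (dN (g x)))) by apply HNc.
  auto_derive.
  - repeat split; auto. exists (c (dN (g x))). exact Hf.
  - eta_reduce. rewrite (is_derive_unique _ _ _ Hf). ring.
Qed.
End Component.

Let HN0 a : is_derive (fun x => c0 (N x)) a (c0 (dN a)) := proj1 (HN a).
Let HN1 a : is_derive (fun x => Defs.c1 (N x)) a (Defs.c1 (dN a)) := proj1 (proj2 (HN a)).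
Let HN2 a : is_derive (fun x => c2 (N x)) a (c2 (dN a)) := proj2 (proj2 (HN a)).

Lemma dvec_weierstrass_int x : I x -> dvec (weierstrass_int N g w x0) x = scal3 (/ 2 * w x) (N (g x)).
Proof.
  intros Hx. unfold dvec, scal3; cbn.
  f_equal; apply is_derive_unique, is_derive_weierstrass_int_comp; auto.
Qed.

Lemma ex_dvec_weierstrass_int x : I x -> ex_dvec (weierstrass_int N g w x0) x.
Proof.
  intros Hx. repeat split; eexists; apply is_derive_weierstrass_int_comp; auto.
Qed.

Lemma dvec2_weierstrass_int x : I x ->
  dvec (dvec (weierstrass_int N g w x0)) x =
  scal3 (/ 2) (add3 (scal3 (Derive w x) (N (g x))) (scal3 (w x * Derive g x) (dN (g x)))).
Proof.
  intros Hx. unfold dvec at 1, add3, scal3; cbn.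
  f_equal; apply is_derive_unique, is_derive2_weierstrass_int_comp; auto.
Qed.

Lemma ex_dvec2_weierstrass_int x : I x -> ex_dvec (dvec (weierstrass_int N g w x0)) x.
Proof.
  intros Hx. repeat split; eexists; apply is_derive2_weierstrass_int_comp; auto.
Qed.
End WeierstrassIntegral.

(** * The null frame *)

Definition null1 (a : R) : pt3 := mk3 (-1 - a ^ 2) (1 - a ^ 2) (2 * a).
Definition null2 (b : R) : pt3 := mk3 (1 + b ^ 2) (1 - b ^ 2) (-2 * b).
Definition dnull1 (a : R) : pt3 := mk3 (-2 * a) (-2 * a) 2.
Definition dnull2 (b : R) : pt3 := mk3 (2 * b) (-2 * b) (-2).

Lemma is_dvec_null1 a : is_dvec null1 a (dnull1 a).
Proof. split; [|split]; cbn; auto_derive; auto; ring. Qed.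

Lemma is_dvec_null2 b : is_dvec null2 b (dnull2 b).
Proof. split; [|split]; cbn; auto_derive; auto; ring. Qed.

Lemma minface_sep3 g1 g2 w1 w2 u0 v0 c :
  minface g1 g2 w1 w2 u0 v0 c = sep3 c (weierstrass_int null1 g1 w1 u0) (weierstrass_int null2 g2 w2 v0).
Proof. reflexivity. Qed.

Definition wnormal (a b : R) : pt3 := mk3 (- a - b) (a - b) (- 1 - a * b).

Lemma wnormal_sq_pos a b : 0 < (1 - a * b) ^ 2 + 2 * (a + b) ^ 2.
Proof.
  destruct (Req_dec (a + b) 0) as [Hab | Hab].
  - replace b with (- a) by lra. nra.
  - assert (0 < (a + b) ^ 2) by now apply pow2_pos. nra.
Qed.

Lemma cross_null_frame a b x y :
  cross (scal3 x (null1 a)) (scal3 y (null2 b)) = scal3 (2 * x * y * (1 - a * b)) (wnormal a b).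
Proof. unfold cross, scal3, null1, null2, wnormal; cbn. f_equal; ring. Qed.

Lemma dotE_scal3 k l u v : dotE (scal3 k u) (scal3 l v) = k * l * dotE u v.
Proof. unfold dotE, scal3; cbn. ring. Qed.

Lemma dotE_wnormal a b : dotE (wnormal a b) (wnormal a b) = (1 - a * b) ^ 2 + 2 * (a + b) ^ 2.
Proof. unfold dotE, wnormal; cbn. ring. Qed.

Lemma euc_normal_wnormal g1 g2 q :
  euc_normal g1 g2 q =
  scal3 (/ sqrt ((1 - g1 (fst q) * g2 (snd q)) ^ 2 + 2 * (g1 (fst q) + g2 (snd q)) ^ 2))
        (wnormal (g1 (fst q)) (g2 (snd q))).
Proof. reflexivity. Qed.

Lemma scal3_eq0 k v : dotE v v <> 0 -> scal3 k v = mk3 0 0 0 -> k = 0.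
Proof.
  intros Hv Hk. assert (E := dotE_scal3 k k v v). rewrite Hk in E.
  replace (dotE (mk3 0 0 0) (mk3 0 0 0)) with 0 in E by (unfold dotE; cbn; ring).
  assert (H : k * k = 0) by (apply (Rmult_eq_reg_r (dotE v v)); [lra|auto]).
  apply Rmult_integral in H. tauto.
Qed.

Lemma velocity_singular a b W1 W2 x1 x2 : a * b = 1 ->
  add3 (scal3 x1 (scal3 (/ 2 * W1) (null1 a))) (scal3 x2 (scal3 (/ 2 * W2) (null2 b))) =
  scal3 (/ 2 * (W1 * x1 - W2 * x2 / a ^ 2)) (null1 a).
Proof.
  intros Hab. assert (Ha : a <> 0) by (intros ->; lra).
  replace b with (/ a) by (field_simplify_eq; lra).
  unfold add3, scal3, null1, null2; cbn. f_equal; field; auto.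
Qed.

Lemma det_singular a b W1 W2 dW1 dW2 p1 p2 x1 x2 y1 y2 : a * b = 1 ->
  det3 (add3 (scal3 x1 (scal3 (/ 2 * W1) (null1 a))) (scal3 x2 (scal3 (/ 2 * W2) (null2 b))))
    (add3 (add3 (scal3 (x1 ^ 2) (scal3 (/ 2) (add3 (scal3 dW1 (null1 a)) (scal3 (W1 * p1) (dnull1 a)))))
                (scal3 y1 (scal3 (/ 2 * W1) (null1 a))))
          (add3 (scal3 (x2 ^ 2) (scal3 (/ 2) (add3 (scal3 dW2 (null2 b)) (scal3 (W2 * p2) (dnull2 b)))))
                (scal3 y2 (scal3 (/ 2 * W2) (null2 b)))))
    (wnormal a b) =
  - (W1 * x1 - W2 * x2 / a ^ 2) * (1 + a ^ 2) ^ 2 * (p1 * x1 ^ 2 * W1 + p2 * x2 ^ 2 * W2) / a.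
Proof.
  intros Hab. assert (Ha : a <> 0) by (intros ->; lra).
  replace b with (/ a) by (field_simplify_eq; lra).
  unfold det3, dotE, cross, add3, scal3, null1, null2, dnull1, dnull2, wnormal; cbn. field. auto.
Qed.

Lemma singular_curvature_sign a b W1 W2 p1 p2 x1 x2 e1 e2 s r :
  a * b = 1 -> W1 <> 0 -> W2 <> 0 -> 0 < s -> 0 < r ->
  p1 * x1 * b + a * p2 * x2 = 0 -> e1 * W1 * a ^ 2 = e2 * W2 -> 0 < x1 * e2 - x2 * e1 ->
  exists k, 0 < k /\
    sgn (e1 * (- (p1 * b) * (/ 2 * W1 * W2 * s)) + e2 * (- (a * p2) * (/ 2 * W1 * W2 * s))) *
    (/ s * (- (W1 * x1 - W2 * x2 / a ^ 2) * (1 + a ^ 2) ^ 2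
            * (p1 * x1 ^ 2 * W1 + p2 * x2 ^ 2 * W2) / a)) / r ^ 3
  = k * (W1 * W2 * p1 * p2).
Proof.
  intros Hab HW1 HW2 Hs Hr Hc He Hd.
  assert (Ha : a <> 0) by (intros ->; lra).
  assert (Hb : b = / a) by (field_simplify_eq; lra). subst b.
  assert (Ha2 : 0 < a ^ 2) by now apply pow2_pos.
  (* Write (e1, e2) = nu (W2, W1 a^2) and (p1, a^2 p2) = mu (x2, -x1).  With rho = W1 x1 - W2 x2 / a^2
     the orientation reads nu rho > 0, the argument of [sgn] is (nu rho) (s/2) (mu W1 W2 a), and both
     sides become multiples of mu^2 W1 W2 x1 x2. *)
  set (nu := e1 / W2).
  assert (He1 : e1 = nu * W2) by (unfold nu; field; auto).
  assert (He2 : e2 = nu * W1 * a ^ 2)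
    by (apply (Rmult_eq_reg_r W2); [rewrite <- He; unfold nu; field |]; auto).
  clearbody nu. subst e1 e2.
  destruct (orthogonal_param p1 (a ^ 2 * p2) x1 x2) as (mu & Hp1 & Hp2).
  { intros H0. assert (x1 = 0) by nra. assert (x2 = 0) by nra. subst. lra. }
  { rewrite <- (Rmult_0_r a), <- Hc. field. auto. }
  assert (Hp2' : p2 = - (mu * x1) / a ^ 2) by (rewrite <- Hp2; field; lra).
  clear Hp2 Hc. subst p1 p2.
  set (rho := W1 * x1 - W2 * x2 / a ^ 2) in *.
  assert (Hrho : 0 < nu * rho).
  { replace (x1 * (nu * W1 * a ^ 2) - x2 * (nu * W2)) with (nu * rho * a ^ 2) in Hd
      by (unfold rho; field; lra). nra. }
  destruct (Req_dec mu 0) as [-> | Hmu].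
  { exists 1. split; [lra | field; lra]. }
  set (z := mu * W1 * W2 * a).
  assert (Hz : z <> 0) by (unfold z; repeat apply Rmult_integral_contrapositive_currified; auto).
  match goal with |- context [sgn ?d] =>
    replace d with (nu * rho * (s / 2) * z) by (unfold rho, z; field; auto) end.
  rewrite sgn_mul_pos, (sgn_div_abs z) by (auto; nra).
  exists (a ^ 2 * rho ^ 2 * (1 + a ^ 2) ^ 2 / (Rabs z * s * r ^ 3)).
  assert (0 < Rabs z) by now apply Rabs_pos_lt.
  assert (0 < rho ^ 2) by (apply pow2_pos; intros H0; rewrite H0 in Hrho; lra).
  split.
  - apply Rdiv_lt_0_compat; [| apply Rmult_lt_0_compat; [nra | now apply pow_lt]].
    assert (0 < (1 + a ^ 2) ^ 2) by (apply pow_lt; lra). nra.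
  - subst z rho. field. repeat split; lra.
Qed.

Lemma det3_scal3_r u v k w : det3 u v (scal3 k w) = k * det3 u v w.
Proof. unfold det3, dotE, scal3; cbn. ring. Qed.

Lemma kernel_singular a b W1 W2 e1 e2 : a * b = 1 ->
  add3 (scal3 e1 (scal3 (/ 2 * W1) (null1 a))) (scal3 e2 (scal3 (/ 2 * W2) (null2 b))) = mk3 0 0 0 ->
  e1 * W1 * a ^ 2 = e2 * W2.
Proof.
  intros Hab H. apply (f_equal c2) in H. unfold add3, scal3, null1, null2 in H; cbn in H.
  replace (e2 * W2) with (e2 * W2 * (a * b)) by (rewrite Hab; ring).
  apply Rminus_diag_uniq. rewrite <- (Rmult_0_r a), <- H. field.
Qed.

Lemma normE_scal3_null1 k a : k <> 0 -> 0 < normE (scal3 k (null1 a)).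
Proof.
  intros Hk. unfold normE. apply sqrt_lt_R0. rewrite dotE_scal3.
  replace (dotE (null1 a) (null1 a)) with (2 * (1 + a ^ 2) ^ 2) by (unfold dotE, null1; cbn; ring).
  assert (0 < (1 + a ^ 2) ^ 2) by (apply pow_lt; nra).
  assert (0 < k ^ 2) by now apply pow2_pos. nra.
Qed.

Lemma singular_velocity_ne0 a W1 W2 x1 x2 e1 e2 : a <> 0 -> W2 <> 0 ->
  e1 * W1 * a ^ 2 = e2 * W2 -> 0 < x1 * e2 - x2 * e1 -> W1 * x1 - W2 * x2 / a ^ 2 <> 0.
Proof.
  intros Ha HW2 He Hd Hrho.
  assert (E : (x1 * e2 - x2 * e1) * W2 = e1 * a ^ 2 * (W1 * x1 - W2 * x2 / a ^ 2)).
  { replace ((x1 * e2 - x2 * e1) * W2) with (x1 * (e2 * W2) - x2 * e1 * W2) by ring.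
    rewrite <- He. field. auto. }
  rewrite Hrho, Rmult_0_r in E. apply Rmult_integral in E. destruct E; lra.
Qed.

Lemma dotL_scal3 k l u v : dotL (scal3 k u) (scal3 l v) = k * l * dotL u v.
Proof. unfold dotL, scal3; cbn. ring. Qed.

Lemma dotL_null1 a : dotL (null1 a) (null1 a) = 0.
Proof. unfold dotL, null1; cbn. ring. Qed.

Lemma dotL_null2 b : dotL (null2 b) (null2 b) = 0.
Proof. unfold dotL, null2; cbn. ring. Qed.

Lemma dotL_null12 a b : dotL (null1 a) (null2 b) = 2 * (1 - a * b) ^ 2.
Proof. unfold dotL, null1, null2; cbn. ring. Qed.

Lemma gauss_null_coords (H : pt2 -> pt3) q :
  dotL (fu H q) (fu H q) = 0 -> dotL (fv H q) (fv H q) = 0 -> dotL (fuv H q) (lnormal H q) = 0 ->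
  dotL (fu H q) (fv H q) <> 0 ->
  gauss H q =
  - (dotL (fuu H q) (lnormal H q) * dotL (fvv H q) (lnormal H q)) / dotL (fu H q) (fv H q) ^ 2.
Proof. intros HE HG HM HF. unfold gauss. rewrite HE, HG, HM. field. auto. Qed.

Definition curvature_factor (g1 g2 w1 w2 : R -> R) (q : pt2) : R :=
  w1 (fst q) * w2 (snd q) * Derive g1 (fst q) * Derive g2 (snd q).

Lemma continuous_curvature_factor g1 g2 w1 w2 p :
  continuous w1 (fst p) -> continuous w2 (snd p) ->
  continuous (Derive g1) (fst p) -> continuous (Derive g2) (snd p) ->
  continuous (curvature_factor g1 g2 w1 w2) p.
Proof.
  intros. unfold curvature_factor.
  repeat apply (continuous_mult (K := R_AbsRing)); auto using continuous_fst_comp, continuous_snd_comp.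
Qed.

Lemma curvature_factor_eq0 g1 g2 w1 w2 q : w1 (fst q) <> 0 -> w2 (snd q) <> 0 ->
  (curvature_factor g1 g2 w1 w2 q = 0 <-> Derive g1 (fst q) = 0 \/ Derive g2 (snd q) = 0).
Proof.
  intros HW1 HW2. unfold curvature_factor. split.
  - intros H. repeat apply Rmult_integral in H as [H | H]; tauto.
  - intros [H | H]; rewrite H; ring.
Qed.

Lemma sing_curv_unfold F g1 g2 (gam eta : R -> pt2) t :
  sing_curv F g1 g2 gam eta t =
  sgn (fst (eta t) * pd2 0 (lam F g1 g2) (gam t) + snd (eta t) * pd2 1 (lam F g1 g2) (gam t)) *
  det3 (dvec (fun s => F (gam s)) t) (dvec (dvec (fun s => F (gam s))) t) (euc_normal g1 g2 (gam t)) /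
  normE (dvec (fun s => F (gam s)) t) ^ 3.
Proof. reflexivity. Qed.

(** * Minfaces *)

Section Minface.
Variables (g1 g2 w1 w2 : R -> R) (u0 v0 : R) (c : pt3) (I1 I2 : R -> Prop).
Hypotheses (HI1o : open I1) (HI1i : intervalP I1) (HI2o : open I2) (HI2i : intervalP I2)
  (Hu0 : I1 u0) (Hv0 : I2 v0)
  (Hg1 : forall x, I1 x -> ex_derive g1 x) (Hw1 : forall x, I1 x -> ex_derive w1 x)
  (Hg2 : forall x, I2 x -> ex_derive g2 x) (Hw2 : forall x, I2 x -> ex_derive w2 x).
Local Notation F := (minface g1 g2 w1 w2 u0 v0 c).

Let dvec_u := dvec_weierstrass_int _ _ _ _ _ _ is_dvec_null1 HI1o HI1i Hu0 Hg1 Hw1.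
Let dvec_v := dvec_weierstrass_int _ _ _ _ _ _ is_dvec_null2 HI2o HI2i Hv0 Hg2 Hw2.
Let dvec2_u := dvec2_weierstrass_int _ _ _ _ _ _ is_dvec_null1 HI1o HI1i Hu0 Hg1 Hw1.
Let dvec2_v := dvec2_weierstrass_int _ _ _ _ _ _ is_dvec_null2 HI2o HI2i Hv0 Hg2 Hw2.
Let ex_dvec_u := ex_dvec_weierstrass_int _ _ _ _ _ _ is_dvec_null1 HI1o HI1i Hu0 Hg1 Hw1.
Let ex_dvec_v := ex_dvec_weierstrass_int _ _ _ _ _ _ is_dvec_null2 HI2o HI2i Hv0 Hg2 Hw2.
Let ex_dvec2_u := ex_dvec2_weierstrass_int _ _ _ _ _ _ is_dvec_null1 HI1o HI1i Hu0 Hg1 Hw1.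
Let ex_dvec2_v := ex_dvec2_weierstrass_int _ _ _ _ _ _ is_dvec_null2 HI2o HI2i Hv0 Hg2 Hw2.

Lemma fu_minface q : I1 (fst q) -> fu F q = scal3 (/ 2 * w1 (fst q)) (null1 (g1 (fst q))).
Proof. intros Hq. rewrite minface_sep3, fu_sep3. exact (dvec_u _ Hq). Qed.

Lemma fv_minface q : I2 (snd q) -> fv F q = scal3 (/ 2 * w2 (snd q)) (null2 (g2 (snd q))).
Proof. intros Hq. rewrite minface_sep3, fv_sep3. exact (dvec_v _ Hq). Qed.

Lemma fuu_minface q : I1 (fst q) ->
  fuu F q = scal3 (/ 2) (add3 (scal3 (Derive w1 (fst q)) (null1 (g1 (fst q))))
                              (scal3 (w1 (fst q) * Derive g1 (fst q)) (dnull1 (g1 (fst q))))).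
Proof. intros Hq. rewrite minface_sep3, fuu_sep3. exact (dvec2_u _ Hq). Qed.

Lemma fvv_minface q : I2 (snd q) ->
  fvv F q = scal3 (/ 2) (add3 (scal3 (Derive w2 (snd q)) (null2 (g2 (snd q))))
                              (scal3 (w2 (snd q) * Derive g2 (snd q)) (dnull2 (g2 (snd q))))).
Proof. intros Hq. rewrite minface_sep3, fvv_sep3. exact (dvec2_v _ Hq). Qed.

Section Curve.
Variables (gam : R -> pt2) (t : R).
Hypotheses (HgI : locally t (fun s => I1 (fst (gam s)) /\ I2 (snd (gam s))))
  (Hgam1 : locally t (ex_derive (fun s => fst (gam s))))
  (Hgam2 : locally t (ex_derive (fun s => snd (gam s)))).

Lemma velocity_minface :
  dvec (fun s => F (gam s)) t =
  add3 (scal3 (Derive (fun s => fst (gam s)) t) (fu F (gam t)))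
       (scal3 (Derive (fun s => snd (gam s)) t) (fv F (gam t))).
Proof.
  destruct (locally_singleton _ _ HgI) as [H1 H2].
  rewrite minface_sep3, fu_sep3, fv_sep3. apply dvec_sep3_curve.
  - now apply ex_dvec_u.
  - now apply ex_dvec_v.
  - exact (locally_singleton _ _ Hgam1).
  - exact (locally_singleton _ _ Hgam2).
Qed.

Lemma acceleration_minface :
  ex_derive (Derive (fun s => fst (gam s))) t -> ex_derive (Derive (fun s => snd (gam s))) t ->
  dvec (dvec (fun s => F (gam s))) t =
  add3 (add3 (scal3 (Derive (fun s => fst (gam s)) t ^ 2) (fuu F (gam t)))
             (scal3 (Derive (Derive (fun s => fst (gam s))) t) (fu F (gam t))))
       (add3 (scal3 (Derive (fun s => snd (gam s)) t ^ 2) (fvv F (gam t)))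
             (scal3 (Derive (Derive (fun s => snd (gam s))) t) (fv F (gam t)))).
Proof.
  intros Hd1 Hd2. destruct (locally_singleton _ _ HgI) as [H1 H2].
  rewrite minface_sep3, fu_sep3, fv_sep3, fuu_sep3, fvv_sep3.
  apply dvec2_sep3_curve; try assumption.
  - generalize (filter_and _ _ HgI (filter_and _ _ Hgam1 Hgam2)). apply filter_imp.
    intros s ([HsI1 HsI2] & Hs1 & Hs2). split; [|split; [|split]]; try assumption.
    + now apply ex_dvec_u.
    + now apply ex_dvec_v.
  - now apply ex_dvec2_u.
  - now apply ex_dvec2_v.
Qed.
End Curve.

Lemma fuv_minface q : fuv F q = mk3 0 0 0.
Proof. rewrite minface_sep3. apply fuv_sep3. Qed.

Lemma gauss_minface q : I1 (fst q) -> I2 (snd q) -> w1 (fst q) <> 0 -> w2 (snd q) <> 0 ->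
  g1 (fst q) * g2 (snd q) <> 1 ->
  gauss F q = 4 * Derive g1 (fst q) * Derive g2 (snd q) /
              (w1 (fst q) * w2 (snd q) * (1 - g1 (fst q) * g2 (snd q)) ^ 4).
Proof.
  intros Hu Hv HW1 HW2 Hab.
  assert (Hz : 1 - g1 (fst q) * g2 (snd q) <> 0) by (intros H; apply Hab; lra).
  assert (Hz2 := pow2_pos _ Hz).
  rewrite gauss_null_coords; rewrite ?fu_minface, ?fv_minface, ?fuv_minface, ?dotL_scal3,
    ?dotL_null1, ?dotL_null2, ?dotL_null12 by assumption.
  2-4: unfold dotL; cbn; try ring.
  2: repeat apply Rmult_integral_contrapositive_currified; lra.
  unfold lnormal.
  rewrite fu_minface, fv_minface, fuu_minface, fvv_minface, cross_null_frame by assumption.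
  set (a := g1 (fst q)) in *; set (b := g2 (snd q)) in *; set (x := w1 (fst q)) in *;
    set (y := w2 (snd q)) in *.
  match goal with |- context [sqrt ?E] =>
    assert (Hs : sqrt E = Rabs (/ 2 * x * y * (1 - a * b) ^ 2)) end.
  { rewrite <- sqrt_Rsqr_abs. f_equal. unfold dotL, scal3, wnormal, Rsqr; cbn. field. }
  rewrite Hs. unfold dotL, scal3, add3, null1, null2, dnull1, dnull2, wnormal; cbn.
  unfold Rabs; destruct Rcase_abs; field; repeat split; auto.
Qed.

Lemma singular_minface q : I1 (fst q) -> I2 (snd q) -> w1 (fst q) <> 0 -> w2 (snd q) <> 0 ->
  (singular F q <-> g1 (fst q) * g2 (snd q) = 1).
Proof.
  intros Hu Hv HW1 HW2. unfold singular. rewrite fu_minface, fv_minface, cross_null_frame by assumption.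
  split.
  - intros H. apply scal3_eq0 in H; [| rewrite dotE_wnormal; apply Rgt_not_eq, wnormal_sq_pos].
    apply Rmult_integral in H as [H | H]; [| lra].
    exfalso. revert H. repeat apply Rmult_integral_contrapositive_currified; lra.
  - intros H. replace (1 - g1 (fst q) * g2 (snd q)) with 0 by lra.
    unfold scal3; cbn. f_equal; ring.
Qed.

Lemma lam_minface q : I1 (fst q) -> I2 (snd q) ->
  lam F g1 g2 q = (1 - g1 (fst q) * g2 (snd q)) *
    (/ 2 * w1 (fst q) * w2 (snd q) *
     sqrt ((1 - g1 (fst q) * g2 (snd q)) ^ 2 + 2 * (g1 (fst q) + g2 (snd q)) ^ 2)).
Proof.
  intros Hu Hv. unfold lam, det3.
  rewrite fu_minface, fv_minface, cross_null_frame, euc_normal_wnormal, dotE_scal3 by assumption.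
  assert (HQ := wnormal_sq_pos (g1 (fst q)) (g2 (snd q))). rewrite <- dotE_wnormal in *.
  set (Q := dotE _ _) in *. rewrite <- (sqrt_sqrt Q) at 2 by lra.
  assert (0 < sqrt Q) by now apply sqrt_lt_R0. field. lra.
Qed.

Lemma pd2_lam_u q : I1 (fst q) -> I2 (snd q) -> g1 (fst q) * g2 (snd q) = 1 ->
  pd2 0 (lam F g1 g2) q = - (Derive g1 (fst q) * g2 (snd q)) *
    (/ 2 * w1 (fst q) * w2 (snd q) *
     sqrt ((1 - g1 (fst q) * g2 (snd q)) ^ 2 + 2 * (g1 (fst q) + g2 (snd q)) ^ 2)).
Proof.
  intros Hu Hv H1. unfold pd2; cbn [upd2 crd2].
  rewrite (Derive_ext_loc _ (fun u => (1 - g1 u * g2 (snd q)) *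
    (/ 2 * w1 u * w2 (snd q) * sqrt ((1 - g1 u * g2 (snd q)) ^ 2 + 2 * (g1 u + g2 (snd q)) ^ 2)))).
  2: { generalize (HI1o _ Hu). apply filter_imp. intros u Hu'. now apply (lam_minface (u, snd q)). }
  apply (Derive_mul_at_root (fun u => 1 - g1 u * g2 (snd q)) (fun u => / 2 * w1 u * w2 (snd q) *
    sqrt ((1 - g1 u * g2 (snd q)) ^ 2 + 2 * (g1 u + g2 (snd q)) ^ 2))); [| | lra].
  - auto_derive; [auto | eta_ring].
  - auto_derive. repeat split; auto. apply wnormal_sq_pos.
Qed.

Lemma pd2_lam_v q : I1 (fst q) -> I2 (snd q) -> g1 (fst q) * g2 (snd q) = 1 ->
  pd2 1 (lam F g1 g2) q = - (g1 (fst q) * Derive g2 (snd q)) *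
    (/ 2 * w1 (fst q) * w2 (snd q) *
     sqrt ((1 - g1 (fst q) * g2 (snd q)) ^ 2 + 2 * (g1 (fst q) + g2 (snd q)) ^ 2)).
Proof.
  intros Hu Hv H1. unfold pd2; cbn [upd2 crd2].
  rewrite (Derive_ext_loc _ (fun v => (1 - g1 (fst q) * g2 v) *
    (/ 2 * w1 (fst q) * w2 v * sqrt ((1 - g1 (fst q) * g2 v) ^ 2 + 2 * (g1 (fst q) + g2 v) ^ 2)))).
  2: { generalize (HI2o _ Hv). apply filter_imp. intros v Hv'. now apply (lam_minface (fst q, v)). }
  apply (Derive_mul_at_root (fun v => 1 - g1 (fst q) * g2 v) (fun v => / 2 * w1 (fst q) * w2 v *
    sqrt ((1 - g1 (fst q) * g2 v) ^ 2 + 2 * (g1 (fst q) + g2 v) ^ 2))); [| | lra].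
  - auto_derive; [auto | eta_ring].
  - auto_derive. repeat split; auto. apply wnormal_sq_pos.
Qed.

Hypotheses (Hw1nz : forall x, I1 x -> w1 x <> 0) (Hw2nz : forall x, I2 x -> w2 x <> 0)
  (Hdg1 : forall x, I1 x -> continuous (Derive g1) x)
  (Hdg2 : forall x, I2 x -> continuous (Derive g2) x).

Lemma curvature_factor_gauss q : I1 (fst q) -> I2 (snd q) -> ~ singular F q ->
  exists k, 0 < k /\ gauss F q = k * curvature_factor g1 g2 w1 w2 q.
Proof.
  intros Hu Hv Hreg. assert (HW1 := Hw1nz _ Hu). assert (HW2 := Hw2nz _ Hv).
  assert (Hab : g1 (fst q) * g2 (snd q) <> 1) by (rewrite <- singular_minface; assumption).
  assert (Hz : 1 - g1 (fst q) * g2 (snd q) <> 0) by (intros H; apply Hab; lra).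
  rewrite gauss_minface by assumption.
  exists (4 / ((w1 (fst q) * w2 (snd q)) ^ 2 * (1 - g1 (fst q) * g2 (snd q)) ^ 4)). split.
  - assert (Hm : 0 < (w1 (fst q) * w2 (snd q)) ^ 2)
      by (apply pow2_pos; now apply Rmult_integral_contrapositive_currified).
    assert (Hz2 := pow2_pos _ Hz).
    apply Rdiv_lt_0_compat; [lra | apply Rmult_lt_0_compat; [exact Hm | nra]].
  - unfold curvature_factor. field. auto.
Qed.

Lemma gauss_sign_near p : I1 (fst p) -> I2 (snd p) -> curvature_factor g1 g2 w1 w2 p <> 0 ->
  exists r, 0 < r /\ forall q, I1 (fst q) -> I2 (snd q) -> dist2 q p < r -> ~ singular F q ->
    0 < gauss F q * curvature_factor g1 g2 w1 w2 p.
Proof.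
  intros Hu Hv Hm.
  assert (Hcont : continuous (curvature_factor g1 g2 w1 w2) p).
  { apply continuous_curvature_factor; auto;
      apply (@ex_derive_continuous R_AbsRing R_NormedModule); auto. }
  destruct (sign_persists _ p Hcont Hm) as (r & Hr & Hnear).
  exists r. split; [exact Hr |]. intros q Hq1 Hq2 Hd Hreg.
  destruct (curvature_factor_gauss q Hq1 Hq2 Hreg) as (k & Hk & ->).
  rewrite Rmult_assoc. now apply Rmult_lt_0_compat, Hnear.
Qed.

Lemma sing_curv_minface (gam eta : R -> pt2) (t : R) :
  locally t (fun s => I1 (fst (gam s)) /\ I2 (snd (gam s))) ->
  locally t (fun s => g1 (fst (gam s)) * g2 (snd (gam s)) = 1) ->
  locally t (ex_derive (fun s => fst (gam s))) -> locally t (ex_derive (fun s => snd (gam s))) ->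
  ex_derive (Derive (fun s => fst (gam s))) t -> ex_derive (Derive (fun s => snd (gam s))) t ->
  add3 (scal3 (fst (eta t)) (fu F (gam t))) (scal3 (snd (eta t)) (fv F (gam t))) = mk3 0 0 0 ->
  0 < det2 (dcurve gam t) (eta t) ->
  exists k, 0 < k /\ sing_curv F g1 g2 gam eta t = k * curvature_factor g1 g2 w1 w2 (gam t).
Proof.
  intros HI Hone H1 H2 Hd1 Hd2 Hker Hdet.
  destruct (locally_singleton _ _ HI) as [Hu Hv].
  assert (HW1 := Hw1nz _ Hu). assert (HW2 := Hw2nz _ Hv).
  assert (Hab := locally_singleton _ _ Hone).
  assert (Hc := Derive_product_locally_const g1 g2 _ _ t (Hg1 _ Hu) (Hg2 _ Hv)
                  (locally_singleton _ _ H1) (locally_singleton _ _ H2) Hone).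
  rewrite fu_minface, fv_minface in Hker by assumption.
  apply kernel_singular in Hker; [| exact Hab].
  unfold det2, dcurve in Hdet; cbn in Hdet.
  rewrite sing_curv_unfold, velocity_minface, (acceleration_minface gam t) by assumption.
  rewrite pd2_lam_u, pd2_lam_v, euc_normal_wnormal, det3_scal3_r, fu_minface, fv_minface,
    fuu_minface, fvv_minface, det_singular, velocity_singular by assumption.
  cbv beta in Hab, Hc. unfold curvature_factor.
  assert (Ha : g1 (fst (gam t)) <> 0) by (intros H; rewrite H in Hab; lra).
  apply singular_curvature_sign; try assumption.
  - apply sqrt_lt_R0, wnormal_sq_pos.
  - apply normE_scal3_null1, Rmult_integral_contrapositive_currified; [lra |].
    eapply singular_velocity_ne0; eassumption.
Qed.

Lemma sing_curv_on_curve (U : pt2 -> Prop) (gam eta : R -> pt2) (a b t : R) :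
  (forall q, U q -> I1 (fst q) /\ I2 (snd q)) ->
  singular_curve U F gam a b -> null_vector_field F gam eta a b -> a < t < b ->
  exists k, 0 < k /\ sing_curv F g1 g2 gam eta t = k * curvature_factor g1 g2 w1 w2 (gam t).
Proof.
  intros HU (_ & Hs1 & Hs2 & Hcur & _) Hnv Ht.
  assert (Hab : locally t (fun s => a < s < b))
    by (apply (open_and (fun s => a < s) (fun s => s < b)); [apply open_gt | apply open_lt | exact Ht]).
  assert (HI : forall s, a < s < b -> I1 (fst (gam s)) /\ I2 (snd (gam s)))
    by (intros s Hs; apply HU, Hcur, Hs).
  destruct (Hnv t Ht) as (_ & Hker & Hdet).
  apply sing_curv_minface; try assumption.
  - generalize Hab. apply filter_imp. exact HI.
  - generalize Hab. apply filter_imp. intros s Hs. destruct (HI s Hs) as [Hu Hv].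
    apply singular_minface; auto. apply Hcur, Hs.
  - generalize Hab. apply filter_imp. exact (Hs1 1%nat).
  - generalize Hab. apply filter_imp. exact (Hs2 1%nat).
  - exact (Hs1 2%nat t Ht).
  - exact (Hs2 2%nat t Ht).
Qed.
End Minface.

(** * Real Weierstrass data *)

Lemma smooth_on_ex_derive (I : R -> Prop) (g : R -> R) :
  smooth_on I g -> forall x, I x -> ex_derive g x.
Proof. intros H x Hx. exact (H 1%nat x Hx). Qed.

Lemma smooth_on_continuous_Derive (I : R -> Prop) (g : R -> R) :
  smooth_on I g -> forall x, I x -> continuous (Derive g) x.
Proof. intros H x Hx. apply (@ex_derive_continuous R_AbsRing R_NormedModule). exact (H 2%nat x Hx). Qed.

Lemma in_proj12U (U : pt2 -> Prop) (q : pt2) : U q -> proj1U U (fst q) /\ proj2U U (snd q).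
Proof. destruct q as [u v]. intros Hq. split; [exists v | exists u]; exact Hq. Qed.

Section WeierstrassData.
Variables (U : pt2 -> Prop) (g1 g2 w1 w2 : R -> R) (u0 v0 : R) (c : pt3).
Hypotheses (HW : real_weierstrass_data U g1 g2 w1 w2) (HU0 : U (u0, v0)).
Local Notation F := (minface g1 g2 w1 w2 u0 v0 c).

Lemma weierstrass_sing_curv (gam eta : R -> pt2) (a b t : R) :
  singular_curve U F gam a b -> null_vector_field F gam eta a b -> a < t < b ->
  exists k, 0 < k /\ sing_curv F g1 g2 gam eta t = k * curvature_factor g1 g2 w1 w2 (gam t).
Proof.
  destruct HW as ((HUo & HUc & _) & Hg1 & Hw1 & Hg2 & Hw2 & Hw1nz & Hw2nz & _).
  destruct (in_proj12U U _ HU0) as [Hu0 Hv0].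
  exact (sing_curv_on_curve g1 g2 w1 w2 u0 v0 c (proj1U U) (proj2U U)
    (open_proj1U U HUo) (interval_proj1U U HUc) (open_proj2U U HUo) (interval_proj2U U HUc) Hu0 Hv0
    (smooth_on_ex_derive _ _ Hg1) (smooth_on_ex_derive _ _ Hw1)
    (smooth_on_ex_derive _ _ Hg2) (smooth_on_ex_derive _ _ Hw2) Hw1nz Hw2nz
    U gam eta a b t (in_proj12U U)).
Qed.

Lemma weierstrass_gauss_sign_near (p : pt2) : U p -> curvature_factor g1 g2 w1 w2 p <> 0 ->
  exists r, 0 < r /\ forall q, U q -> dist2 q p < r -> ~ singular F q ->
    0 < gauss F q * curvature_factor g1 g2 w1 w2 p.
Proof.
  destruct HW as ((HUo & HUc & _) & Hg1 & Hw1 & Hg2 & Hw2 & Hw1nz & Hw2nz & _).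
  destruct (in_proj12U U _ HU0) as [Hu0 Hv0].
  intros Hp Hm. destruct (in_proj12U U _ Hp) as [Hu Hv].
  destruct (gauss_sign_near g1 g2 w1 w2 u0 v0 c (proj1U U) (proj2U U)
    (open_proj1U U HUo) (interval_proj1U U HUc) (open_proj2U U HUo) (interval_proj2U U HUc) Hu0 Hv0
    (smooth_on_ex_derive _ _ Hg1) (smooth_on_ex_derive _ _ Hw1)
    (smooth_on_ex_derive _ _ Hg2) (smooth_on_ex_derive _ _ Hw2) Hw1nz Hw2nz
    (smooth_on_continuous_Derive _ _ Hg1) (smooth_on_continuous_Derive _ _ Hg2) p Hu Hv Hm)
    as (r & Hr & Hnear).
  exists r. split; [exact Hr |]. intros q Hq. apply Hnear; apply (in_proj12U U _ Hq).
Qed.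
End WeierstrassData.

Theorem theorem4p8 (U : pt2 -> Prop) (g1 g2 w1 w2 : R -> R) (u0 v0 : R) (c : pt3)
  (gam eta : R -> pt2) (a b : R) :
  real_weierstrass_data U g1 g2 w1 w2 ->
  U (u0, v0) ->
  singular_curve U (minface g1 g2 w1 w2 u0 v0 c) gam a b ->
  null_vector_field (minface g1 g2 w1 w2 u0 v0 c) gam eta a b ->
  cuspidal_edge U (minface g1 g2 w1 w2 u0 v0 c) (gam 0) ->
  exists delta, 0 < delta /\ forall t, - delta < t < delta ->
    (0 < sing_curv (minface g1 g2 w1 w2 u0 v0 c) g1 g2 gam eta t ->
       exists r, 0 < r /\ forall q, U q -> dist2 q (gam t) < r ->
         ~ singular (minface g1 g2 w1 w2 u0 v0 c) q ->
         0 < gauss (minface g1 g2 w1 w2 u0 v0 c) q) /\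
    (sing_curv (minface g1 g2 w1 w2 u0 v0 c) g1 g2 gam eta t < 0 ->
       exists r, 0 < r /\ forall q, U q -> dist2 q (gam t) < r ->
         ~ singular (minface g1 g2 w1 w2 u0 v0 c) q ->
         gauss (minface g1 g2 w1 w2 u0 v0 c) q < 0) /\
    (sing_curv (minface g1 g2 w1 w2 u0 v0 c) g1 g2 gam eta t = 0 <->
       Derive g1 (fst (gam t)) = 0 \/ Derive g2 (snd (gam t)) = 0).
Proof.
  intros HW HU0 Hsc Hnv _.
  pose proof Hsc as ((Ha & Hb) & _ & _ & Hcur & _).
  pose proof HW as (_ & _ & _ & _ & _ & Hw1nz & Hw2nz & _).
  exists (Rmin (- a) b). split; [now apply Rmin_glb_lt; lra |].
  intros t Ht.
  assert (Htab : a < t < b) by (pose proof (Rmin_l (- a) b); pose proof (Rmin_r (- a) b); lra).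
  destruct (Hcur t Htab) as [Hp _]. destruct (in_proj12U U _ Hp) as [Hu Hv].
  destruct (weierstrass_sing_curv U g1 g2 w1 w2 u0 v0 c HW HU0 gam eta a b t Hsc Hnv Htab)
    as (k & Hk & ->).
  assert (Hnear := weierstrass_gauss_sign_near U g1 g2 w1 w2 u0 v0 c HW HU0 (gam t) Hp).
  set (m := curvature_factor g1 g2 w1 w2 (gam t)) in *.
  split; [| split].
  - intros Hpos. assert (Hm : 0 < m) by nra.
    destruct (Hnear (Rgt_not_eq _ _ Hm)) as (r & Hr & Hq). exists r. split; [exact Hr |].
    intros q HUq Hd Hreg. specialize (Hq q HUq Hd Hreg). nra.
  - intros Hneg. assert (Hm : m < 0) by nra.
    destruct (Hnear (Rlt_not_eq _ _ Hm)) as (r & Hr & Hq). exists r. split; [exact Hr |].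
    intros q HUq Hd Hreg. specialize (Hq q HUq Hd Hreg). nra.
  - rewrite <- curvature_factor_eq0 by auto. fold m. split.
    + intros H. apply Rmult_integral in H as [H | H]; [lra | exact H].
    + intros ->. ring.
Qed.
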